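(* Let $\phi$ be an $n$-cube USO that does not have property L, and let the $2n$-cube USO $\psi$ be a kaleidoscope for $\phi$. Then every $2n$-cube USO $\psi'$ isomorphic to $\psi$ does not have property L.
   Context: For sets $U,V$ let $U\oplus V=(U\cup V)\setminus(U\cap V)$. An $m$-cube orientation on the vertex set of all subsets of $[m]$ has, for each vertex $V$ and $i\in[m]$, exactly one of the directed edges $V\to V\oplus\{i\}$, $V\oplus\{i\}\to V$; it is identified with its outmap $\phi(V)=\{i: V\to V\oplus\{i\}\}$. It is a unique sink orientation (USO) if every face (subgraph induced by an interval $\{X:A\subseteq X\subseteq B\}$) has exactly one sink. For a vertex $V$, the L-graph has vertex set $[m]\setminus V$ and an arc $(i,j)$ for distinct $i,j\notin V$ whenever $j\in\phi(V)\oplus\phi(V\cup\{i\})$; the orientation has property L if all its L-graphs are acyclic. For $V\subseteq[2n]$ write $V_L=V\cap[n]$ and $V_H=\{i-n: i\in V\cap\{n+1,\dots,2n\}\}$. A $2n$-cube USO $\psi$ is a kaleidoscope for the $n$-cube USO $\phi$ if $\psi(V)_L=\phi(V_L\oplus V_H)$ for all $V\subseteq[2n]$. Two $m$-cube USOs $\psi,\psi'$ are isomorphic if there is a bijection $h$ of the set of subsets of $[m]$ such that for all $V,V'$, $V\to V'$ in $\psi$ if and only if $h(V)\to h(V')$ in $\psi'$. *)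

From mathcomp Require Import all_boot.
Set Implicit Arguments. Unset Strict Implicit. Unset Printing Implicit Defensive.

(* Vertices of the m-cube: subsets of 'I_m (= [m], 0-indexed).
   An orientation is given by its outmap phi : {set 'I_m} -> {set 'I_m}. *)
Definition symdiff (T : finType) (U V : {set T}) : {set T} :=
  (U :\: V) :|: (V :\: U).

Section Cube.
Variable m : nat.
Implicit Types (phi : {set 'I_m} -> {set 'I_m}) (V A B X : {set 'I_m}).

Definition is_orientation phi : Prop :=
  forall V (i : 'I_m), (i \in phi V) = (i \notin phi (symdiff V [set i])).

Definition dedge phi V V' : bool :=
  [exists i : 'I_m, (V' == symdiff V [set i]) && (i \in phi V)].

Definition is_face_sink phi A B X : bool :=
  [&& A \subset X, X \subset B & phi X :&: (B :\: A) == set0].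

Definition is_uso phi : Prop :=
  is_orientation phi /\
  forall A B, A \subset B -> #|[set X | is_face_sink phi A B X]| = 1.

Definition Lrel phi V : rel 'I_m := fun i j =>
  [&& i != j, i \notin V, j \notin V &
      j \in symdiff (phi V) (phi (V :|: [set i]))].

Definition acyclic_rel (T : finType) (r : rel T) : Prop :=
  forall x y, r x y -> ~~ connect r y x.

Definition propL phi : Prop := forall V, acyclic_rel (Lrel phi V).

Definition uso_isomorphic phi phi' : Prop :=
  exists h : {set 'I_m} -> {set 'I_m},
    bijective h /\ forall V V', dedge phi V V' = dedge phi' (h V) (h V').
End Cube.

Definition lowpart n (V : {set 'I_(n + n)}) : {set 'I_n} :=
  [set i : 'I_n | lshift n i \in V].
Definition highpart n (V : {set 'I_(n + n)}) : {set 'I_n} :=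
  [set i : 'I_n | rshift n i \in V].

Definition is_kaleidoscope n (phi : {set 'I_n} -> {set 'I_n})
  (psi : {set 'I_(n + n)} -> {set 'I_(n + n)}) : Prop :=
  is_uso psi /\
  forall V, lowpart (psi V) = phi (symdiff (lowpart V) (highpart V)).

(** An isomorphism [h] of cube orientations is an automorphism of the cube
    graph, so there is a permutation [s] of the coordinates with
    [h (V (+) {c}) = h V (+) {s c}], and [h] carries the edge directions of
    [psi] in coordinate [c] to those of [psi'] in coordinate [s c].  Flipping a
    low coordinate of a kaleidoscope [psi] acts as flipping the same coordinate
    of [phi] at [V_L (+) V_H].  Given a cycle in the L-graph of [phi] at [U],
    choose the vertex [V] with [V_L (+) V_H = U] whose image [h V] avoids all the
    coordinates [s (lshift k)]; the L-graph of [psi'] at [h V] then contains the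
    image of that cycle. *)
From mathcomp Require Import all_boot.
Set Implicit Arguments. Unset Strict Implicit. Unset Printing Implicit Defensive.

Local Notation flip V i := (symdiff V [set i]).

Section Symdiff.
Variable T : finType.
Implicit Types (U V X : {set T}) (i j : T).

Lemma in_symdiff U V x : (x \in symdiff U V) = (x \in U) (+) (x \in V).
Proof. by rewrite !inE; case: (x \in U); case: (x \in V). Qed.

Lemma symdiffKA U V : symdiff U (symdiff V U) = V.
Proof. by apply/setP=> x; rewrite !in_symdiff addbC -addbA addbb addbF. Qed.

Lemma flipK V i : flip (flip V i) i = V.
Proof. by apply/setP=> x; rewrite !in_symdiff -addbA addbb addbF. Qed.

Lemma flipC V i j : flip (flip V i) j = flip (flip V j) i.
Proof. by apply/setP=> x; rewrite !in_symdiff -!addbA (addbC (x \in [set i])). Qed.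

Lemma flip_inj V : injective (fun i => flip V i).
Proof.
by move=> i j /setP/(_ i); rewrite !in_symdiff !inE eqxx; case: (i \in V); case: eqP.
Qed.

Lemma flipU V i : i \notin V -> V :|: [set i] = flip V i.
Proof.
move=> iV; apply/setP=> x; rewrite in_symdiff !inE.
by case: eqP => [->|]; rewrite ?(negbTE iV) ?orbF ?addbF.
Qed.

Lemma flip2_neq V i j : i != j -> flip (flip V i) j != V.
Proof.
move=> nij; apply/eqP=> /setP/(_ i).
by rewrite !in_symdiff !inE eqxx (negbTE nij); case: (i \in V).
Qed.

(* Two distinct neighbours [X (+) a] and [X (+) b] of [X] have exactly one
   other common neighbour, namely [X (+) a (+) b]. *)
Lemma common_neighbour_flip X a b k k' : a != b ->
  flip (flip X a) k = flip (flip X b) k' -> flip (flip X a) k != X -> k = b.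
Proof.
move=> nab E nX; have /setP/(_ a) := E.
rewrite !in_symdiff !inE eqxx (negbTE nab).
have [ak|nak] := eqVneq a k; first by move: nX; rewrite -ak flipK eqxx.
have [ak'|_] := eqVneq a k'; last by case: (a \in X).
by move=> _; move/(congr1 (fun S => flip S a)): E; rewrite -ak' flipC !flipK => /flip_inj.
Qed.

Lemma flip_ind (P : {set T} -> Prop) :
  P set0 -> (forall V e, P V -> P (flip V e)) -> forall V, P V.
Proof.
move=> P0 PS V; have [k] := ubnP #|V|; elim: k V => // k IH V.
have [-> //|[e eV]] := set_0Vmem V.
rewrite (cardsD1 e V) eV add1n ltnS => ltV.
by rewrite -(setD1K eV) setUC flipU ?setD11 //; apply/PS/IH.
Qed.

End Symdiff.

Section CubeAutomorphism.
Variables (T : finType) (h : {set T} -> {set T}).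
Hypothesis h_inj : injective h.
Hypothesis h_flip : forall V c, exists k, h (flip V c) = flip (h V) k.

Definition cube_coord c := odflt c [pick k | h (flip set0 c) == flip (h set0) k].

Lemma cube_coord0 c : h (flip set0 c) = flip (h set0) (cube_coord c).
Proof.
rewrite /cube_coord; case: pickP => [k /eqP // | none].
by have [k hc] := h_flip set0 c; move: (none k); rewrite hc eqxx.
Qed.

Lemma cube_coord_inj : injective cube_coord.
Proof.
by move=> c d cd; apply: (@flip_inj _ set0); apply: h_inj; rewrite !cube_coord0 cd.
Qed.

Lemma cube_coordE V d : h (flip V d) = flip (h V) (cube_coord d).
Proof.
elim/flip_ind: V d => [|V e IH] d; first exact: cube_coord0.
have [->|nde] := eqVneq d e; first by rewrite flipK IH flipK.
have [k hk] := h_flip (flip V e) d; rewrite IH in hk.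
have [k' hk'] := h_flip (flip V d) e; rewrite flipC IH hk in hk'.
rewrite hk IH; suff -> : k = cube_coord d by [].
apply: (common_neighbour_flip _ hk'); first by rewrite (inj_eq cube_coord_inj) eq_sym.
by rewrite -hk (inj_eq h_inj) flipC flip2_neq.
Qed.

Lemma mem_cube_coord V c :
  (cube_coord c \in h V) = (cube_coord c \in h set0) (+) (c \in V).
Proof.
elim/flip_ind: V => [|V e IH]; first by rewrite inE addbF.
by rewrite cube_coordE !in_symdiff IH !inE (inj_eq cube_coord_inj) addbA.
Qed.

End CubeAutomorphism.

Lemma dedge_flip m (phi : {set 'I_m} -> {set 'I_m}) V c :
  dedge phi V (flip V c) = (c \in phi V).
Proof.
apply/existsP/idP => [[i /andP[/eqP /flip_inj -> //]] | cV].
by exists c; rewrite eqxx.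
Qed.

Lemma orientation_adjacent m (phi : {set 'I_m} -> {set 'I_m}) V V' :
  is_orientation phi ->
  (dedge phi V V' || dedge phi V' V) = [exists i, V' == flip V i].
Proof.
move=> phi_or; apply/idP/existsP => [|[i /eqP ->]].
  by case/orP=> /existsP[i /andP[/eqP -> _]]; exists i; rewrite ?flipK.
rewrite dedge_flip -{3}(flipK V i) dedge_flip.
by rewrite -[i \in phi (flip V i)]negbK -phi_or orbN.
Qed.

Definition flip_rel m (phi : {set 'I_m} -> {set 'I_m}) V : rel 'I_m :=
  fun i j => (i != j) && (j \in symdiff (phi V) (phi (flip V i))).

Lemma Lrel_flip_rel m (phi : {set 'I_m} -> {set 'I_m}) V i j :
  Lrel phi V i j = [&& i \notin V, j \notin V & flip_rel phi V i j].
Proof.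
rewrite /Lrel /flip_rel; case iV: (i \in V); rewrite ?andbF //=.
by rewrite flipU ?iV // andbCA.
Qed.

Section OrientationIsomorphism.
Variables (m : nat) (psi psi' h : {set 'I_m} -> {set 'I_m}).
Hypotheses (psi_or : is_orientation psi) (psi'_or : is_orientation psi').
Hypothesis h_inj : injective h.
Hypothesis h_dedge : forall V V', dedge psi V V' = dedge psi' (h V) (h V').

Lemma iso_flip V c : exists k, h (flip V c) = flip (h V) k.
Proof.
have : [exists i, flip V c == flip V i] by apply/existsP; exists c.
rewrite -(orientation_adjacent _ _ psi_or) !h_dedge (orientation_adjacent _ _ psi'_or).
by case/existsP=> k /eqP; exists k.
Qed.

Lemma iso_outmap V c : (cube_coord h c \in psi' (h V)) = (c \in psi V).
Proof. by rewrite -dedge_flip -(cube_coordE h_inj iso_flip) -h_dedge dedge_flip. Qed.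

Lemma iso_flip_rel V i j :
  flip_rel psi' (h V) (cube_coord h i) (cube_coord h j) = flip_rel psi V i j.
Proof.
rewrite /flip_rel (inj_eq (cube_coord_inj h_inj iso_flip)).
by rewrite -(cube_coordE h_inj iso_flip) !in_symdiff !iso_outmap.
Qed.

End OrientationIsomorphism.

Section Halves.
Variable n : nat.
Implicit Types (L H : {set 'I_n}) (V : {set 'I_(n + n)}).

Lemma mem_lowpart V k : (k \in lowpart V) = (lshift n k \in V).
Proof. by rewrite inE. Qed.

Definition cube_join L H : {set 'I_(n + n)} := lshift n @: L :|: @rshift n n @: H.

Lemma lowpart_join L H : lowpart (cube_join L H) = L.
Proof.
apply/setP=> k; rewrite !inE (mem_imset _ _ (@lshift_inj n n)).
suff /negbTE -> : lshift n k \notin @rshift n n @: H by rewrite orbF.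
by apply/imsetP=> -[j _ /eqP]; rewrite eq_lrshift.
Qed.

Lemma highpart_join L H : highpart (cube_join L H) = H.
Proof.
apply/setP=> k; rewrite !inE (mem_imset _ _ (@rshift_inj n n)).
suff /negbTE -> : @rshift n n k \notin lshift n @: L by [].
by apply/imsetP=> -[j _ /eqP]; rewrite eq_rlshift.
Qed.

Lemma lowpart_flip V a : lowpart (flip V (lshift n a)) = flip (lowpart V) a.
Proof. by apply/setP=> k; rewrite !inE (inj_eq (@lshift_inj n n)). Qed.

Lemma highpart_flip V a : highpart (flip V (lshift n a)) = highpart V.
Proof. by apply/setP=> k; rewrite !inE eq_rlshift andbF orbF. Qed.

End Halves.

Lemma kaleidoscope_flip_rel n (phi : {set 'I_n} -> {set 'I_n})
    (psi : {set 'I_(n + n)} -> {set 'I_(n + n)}) :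
  (forall V, lowpart (psi V) = phi (symdiff (lowpart V) (highpart V))) ->
  forall V a b, flip_rel psi V (lshift n a) (lshift n b) =
  flip_rel phi (symdiff (lowpart V) (highpart V)) a b.
Proof.
move=> psi_low V a b; rewrite /flip_rel (inj_eq (@lshift_inj n n)).
rewrite !in_symdiff -!mem_lowpart !psi_low lowpart_flip highpart_flip.
suff -> : symdiff (flip (lowpart V) a) (highpart V) =
          flip (symdiff (lowpart V) (highpart V)) a by [].
by apply/setP=> x; rewrite !in_symdiff addbAC.
Qed.

Lemma homo_connect (T T' : finType) (r : rel T) (r' : rel T') (f : T -> T') :
  {homo f : a b / r a b >-> r' a b} ->
  {homo f : a b / connect r a b >-> connect r' a b}.
Proof.
move=> f_homo a b /connectP[p rp ->]; apply/connectP.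
by exists (map f p); [exact: homo_path rp | rewrite last_map].
Qed.

Lemma acyclic_rel_homo (T T' : finType) (r : rel T) (r' : rel T') (f : T -> T') :
  {homo f : a b / r a b >-> r' a b} -> acyclic_rel r' -> acyclic_rel r.
Proof.
move=> f_homo acyc' a b /f_homo rab.
exact: contra (@homo_connect _ _ _ _ _ f_homo b a) (acyc' _ _ rab).
Qed.

Theorem theorem6p6 (n : nat) (phi : {set 'I_n} -> {set 'I_n})
  (psi psi' : {set 'I_(n + n)} -> {set 'I_(n + n)}) :
  is_uso phi -> ~ propL phi ->
  is_kaleidoscope phi psi ->
  is_uso psi' -> uso_isomorphic psi psi' ->
  ~ propL psi'.
Proof.
move=> _ notL [[psi_or _] psi_low] [psi'_or _] [h [/bij_inj h_inj h_dedge]] L'.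
apply: notL => U.
have h_flip := iso_flip psi_or psi'_or h_dedge.
pose s k := cube_coord h (lshift n k).
pose L0 := [set k | s k \in h set0].
pose V := cube_join L0 (symdiff U L0).
have UV : symdiff (lowpart V) (highpart V) = U.
  by rewrite lowpart_join highpart_join symdiffKA.
have s_notin k : s k \notin h V.
  by rewrite (mem_cube_coord h_inj h_flip) -mem_lowpart lowpart_join inE addbb.
apply: (acyclic_rel_homo (f := s) _ (L' (h V))) => a b.
rewrite !Lrel_flip_rel !s_notin => /and3P[_ _ ab].
by rewrite (iso_flip_rel psi_or psi'_or h_inj h_dedge) (kaleidoscope_flip_rel psi_low) UV.
Qed.
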